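(* In the two-SP bandwidth game with minimum small-cell bandwidth constraints, suppose both constraints are violated by the unconstrained equilibrium, i.e. $B_{1,S}^{\mathrm{free}}<B_{1,S}^0$ and $B_{2,S}^{\mathrm{free}}<B_{2,S}^0$. Then the unique constrained Nash equilibrium $(B_{1,S}^*,B_{2,S}^* )$ is of one of the following types: (I) $B_{1,S}^*=B_{1,S}^0$ and $B_{2,S}^*=B_{2,S}^0$; or (II) exactly one SP sits at its lower bound and the other strictly exceeds it, i.e. $B_{1,S}^*=B_{1,S}^0,\ B_{2,S}^*>B_{2,S}^0$ or $B_{1,S}^*>B_{1,S}^0,\ B_{2,S}^*=B_{2,S}^0$. In particular, it is never the case that both $B_{1,S}^*>B_{1,S}^0$ and $B_{2,S}^*>B_{2,S}^0$.
   Context: Fixed parameters: $\alpha\in(0,1)$; densities $N_m>0$ (mobile users) and $N_f>0$ (fixed users); spectral efficiency $R_0>0$; common small-cell density $\lambda_S>1$ (macro density normalized to 1); total bandwidths $B_1,B_2>0$; regulatory lower bounds $B_{i,S}^0\in[0,B_i]$. Utility $u(r)=\frac{r^{1-\alpha}}{1-\alpha}$, $u'(r)=r^{-\alpha}$. Let $\epsilon=\lambda_S^{1/\alpha-1}$. Two-SP bandwidth game: SP $i\in\{1,2\}$ chooses small-cell bandwidth $B_{i,S}\in[B_{i,S}^0,B_i]$ and sets $B_{i,M}=B_i-B_{i,S}$. Given a profile, prices are market-clearing, mobile users use macro-cells and fixed users use small-cells, so the average rates are $R_S=\frac{\lambda_S(B_{1,S}+B_{2,S})R_0}{N_f}$ and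 $R_M=\frac{(B_{1,M}+B_{2,M})R_0}{N_m}$, and SP $i$'s payoff (revenue) is $S_i=R_0B_{i,M}R_M^{-\alpha}+R_0\lambda_SB_{i,S}R_S^{-\alpha}$ (a term with zero bandwidth is $0$). This game has a unique pure Nash equilibrium. Define $B_{i,S}^{\mathrm{free}}=\frac{\epsilon N_fB_i}{\epsilon N_f+N_m}$, the equilibrium small-cell bandwidth of SP $i$ when there are no constraints ($B_{i,S}^0=0$). *)

From Stdlib Require Import Reals.
Open Scope R_scope.

(* Revenue from one band: R0 * w * r^(-alpha), where w is the (effective)
   bandwidth and r the average rate; a term with zero bandwidth is 0. *)
Definition band_rev (alpha R0 w r : R) : R :=
  if Req_EM_T w 0 then 0 else R0 * w * Rpower r (- alpha).

Definition rateS (lamS R0 Nf b1S b2S : R) : R := lamS * (b1S + b2S) * R0 / Nf.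
Definition rateM (R0 Nm B1 B2 b1S b2S : R) : R :=
  ((B1 - b1S) + (B2 - b2S)) * R0 / Nm.

Definition payoff1 (alpha Nm Nf R0 lamS B1 B2 b1S b2S : R) : R :=
  band_rev alpha R0 (B1 - b1S) (rateM R0 Nm B1 B2 b1S b2S)
  + band_rev alpha R0 (lamS * b1S) (rateS lamS R0 Nf b1S b2S).
Definition payoff2 (alpha Nm Nf R0 lamS B1 B2 b1S b2S : R) : R :=
  band_rev alpha R0 (B2 - b2S) (rateM R0 Nm B1 B2 b1S b2S)
  + band_rev alpha R0 (lamS * b2S) (rateS lamS R0 Nf b1S b2S).

Definition is_NE (alpha Nm Nf R0 lamS B1 B2 B10 B20 b1 b2 : R) : Prop :=
  B10 <= b1 <= B1 /\ B20 <= b2 <= B2 /\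
  (forall x, B10 <= x <= B1 ->
     payoff1 alpha Nm Nf R0 lamS B1 B2 x b2 <= payoff1 alpha Nm Nf R0 lamS B1 B2 b1 b2) /\
  (forall y, B20 <= y <= B2 ->
     payoff2 alpha Nm Nf R0 lamS B1 B2 b1 y <= payoff2 alpha Nm Nf R0 lamS B1 B2 b1 b2).

Definition eps (alpha lamS : R) : R := Rpower lamS (/ alpha - 1).
Definition B_free (alpha Nm Nf lamS Bi : R) : R :=
  eps alpha lamS * Nf * Bi / (eps alpha lamS * Nf + Nm).

(* If both SPs were strictly above their lower bounds, each could lower its
   small-cell bandwidth, so the left derivative of each payoff in its own
   strategy would be nonnegative.  These two marginal revenues add up to
   (2 - alpha) R0 (lamS u'(R_S) - u'(R_M)), so the small-cell price
   lamS u'(R_S) would be at least the macro-cell price u'(R_M).  Yet both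
   bounds exceed the unconstrained shares, which forces
   eps Nf (B_{1,M} + B_{2,M}) < Nm (B_{1,S} + B_{2,S}); by the choice of eps
   this is exactly the opposite strict inequality between the prices.  The
   derivative argument breaks down only when no macro bandwidth is left; there
   moving a little bandwidth to the macro band is profitable, since u'(r)
   blows up as r -> 0. *)
From Stdlib Require Import Reals Lra.
From Coquelicot Require Import Coquelicot.
Open Scope R_scope.

Lemma Rpower_opp_le_contravar (a x y : R) :
  0 <= a -> 0 < x <= y -> Rpower y (- a) <= Rpower x (- a).
Proof.
  intros Ha Hxy. rewrite !Rpower_Ropp.
  apply Rinv_le_contravar; [apply exp_pos | now apply Rle_Rpower_l].
Qed.

Lemma Rpower_opp_unbounded_at_0 (a K : R) :
  0 < a -> exists r0, 0 < r0 /\ forall r, 0 < r <= r0 -> K < Rpower r (- a).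
Proof.
  intros Ha. exists (Rpower (Rabs K + 1) (- / a)). split; [apply exp_pos|].
  intros r Hr.
  assert (Hr0 : Rpower (Rpower (Rabs K + 1) (- / a)) (- a) = Rabs K + 1).
  { rewrite Rpower_mult.
    replace (- / a * - a) with 1 by (field; lra).
    apply Rpower_1. pose proof (Rabs_pos K); lra. }
  pose proof (Rpower_opp_le_contravar a r _ ltac:(lra) Hr).
  pose proof (Rle_abs K). lra.
Qed.

Lemma derive_nonneg_of_left_max (f : R -> R) (lo b D : R) :
  is_derive f b D -> lo < b -> (forall x, lo <= x <= b -> f x <= f b) -> 0 <= D.
Proof.
  intros Hd%is_derive_Reals Hlo Hmax.
  destruct (Rle_or_lt 0 D) as [|HD]; [easy | exfalso].
  destruct (Hd (- D / 2) ltac:(lra)) as [[del Hdel] Hquot]; simpl in Hquot.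
  set (h := - Rmin (del / 2) (b - lo)).
  assert (Hh : 0 < - h <= b - lo /\ - h < del).
  { pose proof (Rmin_l (del / 2) (b - lo)). pose proof (Rmin_r (del / 2) (b - lo)).
    pose proof (Rmin_pos (del / 2) (b - lo) ltac:(lra) ltac:(lra)). unfold h; lra. }
  specialize (Hquot h ltac:(lra) ltac:(rewrite Rabs_left; lra)).
  assert (Hq : 0 <= (f (b + h) - f b) / h).
  { replace ((f (b + h) - f b) / h) with ((f b - f (b + h)) / - h) by (field; lra).
    apply Rdiv_le_0_compat; [|lra]. enough (f (b + h) <= f b) by lra.
    apply Hmax; lra. }
  apply Rabs_def2 in Hquot. lra.
Qed.

Lemma band_rev_Rpower (alpha R0 w r : R) :
  band_rev alpha R0 w r = R0 * w * Rpower r (- alpha).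
Proof. unfold band_rev. destruct (Req_EM_T w 0) as [->|]; ring. Qed.

Lemma payoff1_Rpower (alpha Nm Nf R0 lamS B1 B2 b1 b2 : R) :
  payoff1 alpha Nm Nf R0 lamS B1 B2 b1 b2 =
  R0 * (B1 - b1) * Rpower (rateM R0 Nm B1 B2 b1 b2) (- alpha)
  + R0 * (lamS * b1) * Rpower (rateS lamS R0 Nf b1 b2) (- alpha).
Proof. unfold payoff1. now rewrite !band_rev_Rpower. Qed.

Lemma payoff2_swap (alpha Nm Nf R0 lamS B1 B2 b1 b2 : R) :
  payoff2 alpha Nm Nf R0 lamS B1 B2 b1 b2 = payoff1 alpha Nm Nf R0 lamS B2 B1 b2 b1.
Proof.
  unfold payoff1, payoff2, rateM, rateS.
  now rewrite (Rplus_comm (B1 - b1)), (Rplus_comm b1).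
Qed.

Definition marginal_payoff1 (alpha Nm Nf R0 lamS B1 B2 b1 b2 : R) : R :=
  let pM := Rpower (rateM R0 Nm B1 B2 b1 b2) (- alpha) in
  let pS := Rpower (rateS lamS R0 Nf b1 b2) (- alpha) in
  R0 * (lamS * pS - pM
        + alpha * ((B1 - b1) * pM / ((B1 - b1) + (B2 - b2))
                   - lamS * b1 * pS / (b1 + b2))).

Lemma is_derive_payoff1 (alpha Nm Nf R0 lamS B1 B2 b1 b2 : R) :
  0 < Nm -> 0 < Nf -> 0 < R0 -> 0 < lamS ->
  0 < (B1 - b1) + (B2 - b2) -> 0 < b1 + b2 ->
  is_derive (fun x => payoff1 alpha Nm Nf R0 lamS B1 B2 x b2) b1
    (marginal_payoff1 alpha Nm Nf R0 lamS B1 B2 b1 b2).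
Proof.
  intros HNm HNf HR0 Hl HM HS.
  eapply is_derive_ext; [intro x; symmetry; apply payoff1_Rpower|].
  unfold marginal_payoff1, rateM, rateS, Rpower.
  auto_derive.
  - repeat split; repeat apply Rmult_lt_0_compat; try apply Rinv_0_lt_compat; lra.
  - unfold Rminus, Rdiv.
    set (EM := exp _). set (ES := exp (_ * ln (lamS * _ * _ * _))).
    field. repeat split; nra.
Qed.

Lemma marginal_payoff1_nonneg (alpha Nm Nf R0 lamS B1 B2 B10 b1 b2 : R) :
  0 < Nm -> 0 < Nf -> 0 < R0 -> 0 < lamS -> 0 <= b2 ->
  0 <= B10 < b1 -> b1 <= B1 -> 0 < (B1 - b1) + (B2 - b2) ->
  (forall x, B10 <= x <= B1 ->
     payoff1 alpha Nm Nf R0 lamS B1 B2 x b2 <= payoff1 alpha Nm Nf R0 lamS B1 B2 b1 b2) ->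
  0 <= marginal_payoff1 alpha Nm Nf R0 lamS B1 B2 b1 b2.
Proof.
  intros HNm HNf HR0 Hl Hb2 Hb1 Hb1' HM Hbest.
  apply (derive_nonneg_of_left_max (fun x => payoff1 alpha Nm Nf R0 lamS B1 B2 x b2) B10 b1);
    [|lra|].
  - apply is_derive_payoff1; lra.
  - intros x Hx. apply Hbest. lra.
Qed.

(* Both SPs face the same rates, so the alpha-terms add up to
   alpha (u'(R_M) - lamS u'(R_S)). *)
Lemma marginal_payoff1_sum (alpha Nm Nf R0 lamS B1 B2 b1 b2 : R) :
  0 < (B1 - b1) + (B2 - b2) -> 0 < b1 + b2 ->
  marginal_payoff1 alpha Nm Nf R0 lamS B1 B2 b1 b2
  + marginal_payoff1 alpha Nm Nf R0 lamS B2 B1 b2 b1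
  = R0 * (2 - alpha) * (lamS * Rpower (rateS lamS R0 Nf b1 b2) (- alpha)
                        - Rpower (rateM R0 Nm B1 B2 b1 b2) (- alpha)).
Proof.
  intros HM HS. unfold marginal_payoff1, rateM, rateS.
  rewrite (Rplus_comm (B2 - b2)), (Rplus_comm b2).
  field. lra.
Qed.

Lemma small_cell_excess_of_B_free_lt (alpha Nm Nf lamS Bi bi : R) :
  0 < Nm -> 0 < Nf -> B_free alpha Nm Nf lamS Bi < bi ->
  eps alpha lamS * Nf * (Bi - bi) < bi * Nm.
Proof.
  intros HNm HNf. unfold B_free.
  assert (He : 0 < eps alpha lamS) by apply exp_pos.
  assert (Hd : 0 < eps alpha lamS * Nf + Nm) by nra.
  intros Hlt%(Rmult_lt_compat_r _ _ _ Hd).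
  unfold Rdiv in Hlt. rewrite Rmult_assoc, Rinv_l, Rmult_1_r in Hlt by lra.
  lra.
Qed.

(* [eps] is chosen so that [eps Nf m = s Nm] is exactly the balance of the
   two prices; taking logarithms turns the claim into the hypothesis. *)
Lemma small_cell_price_lt (alpha Nm Nf R0 lamS m s : R) :
  0 < alpha -> 0 < Nm -> 0 < Nf -> 0 < R0 -> 0 < lamS -> 0 < m -> 0 < s ->
  eps alpha lamS * Nf * m < s * Nm ->
  lamS * Rpower (lamS * s * R0 / Nf) (- alpha) < Rpower (m * R0 / Nm) (- alpha).
Proof.
  intros Ha HNm HNf HR0 Hl Hm Hs Hlt.
  assert (He : 0 < eps alpha lamS) by apply exp_pos.
  apply ln_increasing in Hlt; [|repeat apply Rmult_lt_0_compat; lra].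
  rewrite !ln_mult in Hlt by (try apply Rmult_lt_0_compat; lra).
  unfold eps in Hlt. rewrite ln_Rpower in Hlt.
  apply ln_lt_inv; [apply Rmult_lt_0_compat; [lra | apply exp_pos] | apply exp_pos |].
  rewrite ln_mult, !ln_Rpower by (try apply exp_pos; lra).
  unfold Rdiv. rewrite !ln_mult, !ln_Rinv by
    (try apply Rinv_0_lt_compat; repeat apply Rmult_lt_0_compat; lra).
  apply Rmult_lt_compat_l with (r := alpha) in Hlt; [|lra].
  replace (alpha * ((/ alpha - 1) * ln lamS + ln Nf + ln m))
    with ((1 - alpha) * ln lamS + alpha * (ln Nf + ln m)) in Hlt by (field; lra).
  lra.
Qed.

(* With no macro bandwidth the macro price u'(0+) is unbounded, so moving a
   small amount [t] of bandwidth to the macro band gains more than the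
   [lamS t u'(R_S)] it can lose in the small-cell band. *)
Lemma full_small_cell_not_best_response (alpha Nm Nf R0 lamS B1 B2 B10 : R) :
  0 < alpha -> 0 < Nm -> 0 < Nf -> 0 < R0 -> 0 < lamS ->
  0 <= B10 < B1 -> 0 < B2 ->
  exists x, B10 <= x <= B1 /\
    payoff1 alpha Nm Nf R0 lamS B1 B2 B1 B2 < payoff1 alpha Nm Nf R0 lamS B1 B2 x B2.
Proof.
  intros Ha HNm HNf HR0 Hl HB10 HB2.
  set (pS0 := Rpower (rateS lamS R0 Nf B1 B2) (- alpha)).
  destruct (Rpower_opp_unbounded_at_0 alpha (lamS * pS0) Ha) as [r0 [Hr0 Hbig]].
  set (t := Rmin (B1 - B10) (r0 * Nm / R0)).
  assert (Ht : 0 < t <= B1 - B10 /\ t <= r0 * Nm / R0).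
  { split; [split|]; [apply Rmin_pos | apply Rmin_l | apply Rmin_r].
    - lra.
    - apply Rdiv_lt_0_compat; nra. }
  exists (B1 - t). split; [lra|].
  rewrite !payoff1_Rpower. unfold rateM.
  replace (B1 - (B1 - t)) with t by ring.
  rewrite !Rminus_diag, !Rplus_0_r.
  assert (HpM : lamS * pS0 < Rpower (t * R0 / Nm) (- alpha)).
  { apply Hbig. split; [apply Rdiv_lt_0_compat; nra|].
    apply (Rmult_le_reg_r (Nm / R0)); [apply Rdiv_lt_0_compat; lra|].
    replace (t * R0 / Nm * (Nm / R0)) with t by (field; lra).
    replace (r0 * (Nm / R0)) with (r0 * Nm / R0) by (field; lra). lra. }
  assert (HpS : pS0 <= Rpower (rateS lamS R0 Nf (B1 - t) B2) (- alpha)).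
  { apply Rpower_opp_le_contravar; [lra|]. unfold rateS. split.
    - apply Rdiv_lt_0_compat; [|lra]. apply Rmult_lt_0_compat; nra.
    - unfold Rdiv. apply Rmult_le_compat_r; [left; apply Rinv_0_lt_compat; lra|].
      apply Rmult_le_compat_r; nra. }
  fold pS0. set (pS := Rpower (rateS _ _ _ (B1 - t) B2) _) in *.
  assert (R0 * (lamS * (B1 - t)) * pS0 <= R0 * (lamS * (B1 - t)) * pS)
    by (apply Rmult_le_compat_l; [apply Rmult_le_pos; [|apply Rmult_le_pos]|]; lra).
  assert (R0 * t * (lamS * pS0) < R0 * t * Rpower (t * R0 / Nm) (- alpha))
    by (apply Rmult_lt_compat_l; [apply Rmult_lt_0_compat|]; lra).
  lra.
Qed.

Theorem proposition1 (alpha Nm Nf R0 lamS B1 B2 B10 B20 b1 b2 : R) :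
  0 < alpha < 1 -> 0 < Nm -> 0 < Nf -> 0 < R0 -> 1 < lamS ->
  0 < B1 -> 0 < B2 -> 0 <= B10 <= B1 -> 0 <= B20 <= B2 ->
  B_free alpha Nm Nf lamS B1 < B10 ->
  B_free alpha Nm Nf lamS B2 < B20 ->
  is_NE alpha Nm Nf R0 lamS B1 B2 B10 B20 b1 b2 ->
  (b1 = B10 /\ b2 = B20) \/
  (b1 = B10 /\ b2 > B20) \/
  (b1 > B10 /\ b2 = B20).
Proof.
  intros Ha HNm HNf HR0 Hl HB1 HB2 HB10 HB20 Hfree1 Hfree2
    [[[Hb1|<-] Hb1'] [[[Hb2|<-] Hb2'] [Hbest1 Hbest2]]]; try (left + right; lra).
  exfalso.
  destruct (Rle_lt_or_eq 0 ((B1 - b1) + (B2 - b2))) as [HM|HM]; [lra| |].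
  - assert (Hbest2' : forall y, B20 <= y <= B2 ->
      payoff1 alpha Nm Nf R0 lamS B2 B1 y b1 <= payoff1 alpha Nm Nf R0 lamS B2 B1 b2 b1).
    { intros y Hy. rewrite <- !payoff2_swap. now apply Hbest2. }
    pose proof (marginal_payoff1_nonneg alpha Nm Nf R0 lamS B1 B2 B10 b1 b2
      HNm HNf HR0 ltac:(lra) ltac:(lra) ltac:(lra) Hb1' HM Hbest1) as D1.
    pose proof (marginal_payoff1_nonneg alpha Nm Nf R0 lamS B2 B1 B20 b2 b1
      HNm HNf HR0 ltac:(lra) ltac:(lra) ltac:(lra) Hb2' ltac:(lra) Hbest2') as D2.
    pose proof (marginal_payoff1_sum alpha Nm Nf R0 lamS B1 B2 b1 b2 HM ltac:(lra)) as Hsum.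
    pose proof (small_cell_excess_of_B_free_lt alpha Nm Nf lamS B1 b1 HNm HNf ltac:(lra)) as E1.
    pose proof (small_cell_excess_of_B_free_lt alpha Nm Nf lamS B2 b2 HNm HNf ltac:(lra)) as E2.
    pose proof (small_cell_price_lt alpha Nm Nf R0 lamS ((B1 - b1) + (B2 - b2)) (b1 + b2)
      ltac:(lra) HNm HNf HR0 ltac:(lra) HM ltac:(lra) ltac:(lra)) as Hprice.
    unfold rateS, rateM in Hsum.
    assert (Hc : 0 < R0 * (2 - alpha)) by (apply Rmult_lt_0_compat; lra).
    nra.
  - destruct (full_small_cell_not_best_response alpha Nm Nf R0 lamS B1 B2 B10)
      as [x [Hx Hgain]]; try lra.
    replace b1 with B1 in Hbest1 by lra. replace b2 with B2 in Hbest1 by lra.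
    specialize (Hbest1 x Hx). lra.
Qed.
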